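(* Every countable pca $\mathcal{A}$ embeds in $\mathcal{K}_2$.
   Context: A pca is a set with a partial binary application operation containing distinct $\mathrm{s},\mathrm{k}$ with $\mathrm{k}ab\downarrow=a$, $\mathrm{s}ab\downarrow$, $\mathrm{s}abc\simeq(ac)(bc)$. An embedding of pcas is an injective map $f$ with: if $ab$ is defined then $f(a)f(b)$ is defined and equals $f(ab)$. $\mathcal{K}_2$: elements are all total functions $g:\omega\to\omega$, with $g\cdot h$ the function $n\mapsto\Phi^{g\oplus h}_{g(0)}(n)$ ($\Phi_e$ the $e$-th Turing functional, $(g\oplus h)(2n)=g(n)$, $(g\oplus h)(2n+1)=h(n)$), defined if and only if this function is total. *)

From mathcomp Require Import all_boot.
Set Implicit Arguments. Unset Strict Implicit. Unset Printing Implicit Defensive.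

Definition oapp (A : Type) (app : A -> A -> option A) (x y : option A) : option A :=
  match x, y with Some a, Some b => app a b | _, _ => None end.

(* A pca: distinct s, k with  k a b = a,  s a b defined,  s a b c ~ (a c)(b c)
   (Kleene equality = equality of option values). *)
Definition is_pca (A : Type) (app : A -> A -> option A) : Prop :=
  exists s k : A, s <> k /\
    (forall a b, oapp app (app k a) (Some b) = Some a) /\
    (forall a b, exists v, oapp app (app s a) (Some b) = Some v) /\
    (forall a b c, oapp app (oapp app (app s a) (Some b)) (Some c)
                   = oapp app (app a c) (app b c)).

Definition countable_type (A : Type) : Prop := exists g : A -> nat, injective g.

(* Oracle-computable partial functionals (mu-recursive with oracle)      *)
(* Programs are generic trees GenTree.tree nat (a countType); the e-th   *)
(* program is  unpickle e.  Meaning of a tree, on argument list xs:      *)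
(*   anything else    : nowhere defined                                  *)

Notation prog := (GenTree.tree nat).

Inductive eval (f : nat -> nat) : prog -> seq nat -> nat -> Prop :=
| ev_proj i xs : eval f (GenTree.Leaf i) xs (nth 0 xs i)
| ev_zero l xs : eval f (GenTree.Node 0 l) xs 0
| ev_succ l xs : eval f (GenTree.Node 1 l) xs (nth 0 xs 0).+1
| ev_orc l xs : eval f (GenTree.Node 2 l) xs (f (nth 0 xs 0))
| ev_comp g hs xs ys y :
    evals f hs xs ys -> eval f g ys y -> eval f (GenTree.Node 3 (g :: hs)) xs y
| ev_rec0 b s xs y :
    eval f b xs y -> eval f (GenTree.Node 4 [:: b; s]) (0 :: xs) y
| ev_recS b s n xs r y :
    eval f (GenTree.Node 4 [:: b; s]) (n :: xs) r ->
    eval f s (n :: r :: xs) y ->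
    eval f (GenTree.Node 4 [:: b; s]) (n.+1 :: xs) y
| ev_mu c xs y :
    mu_search f c xs 0 y -> eval f (GenTree.Node 5 [:: c]) xs y
with evals (f : nat -> nat) : seq prog -> seq nat -> seq nat -> Prop :=
| evs_nil xs : evals f [::] xs [::]
| evs_cons h hs xs y ys :
    eval f h xs y -> evals f hs xs ys -> evals f (h :: hs) xs (y :: ys)
with mu_search (f : nat -> nat) : prog -> seq nat -> nat -> nat -> Prop :=
| mu_stop c xs z : eval f c (z :: xs) 0 -> mu_search f c xs z z
| mu_step c xs z v y :
    eval f c (z :: xs) v.+1 -> mu_search f c xs z.+1 y -> mu_search f c xs z y.

Definition Phi (f : nat -> nat) (e n y : nat) : Prop :=
  match @unpickle prog e with
  | Some p => eval f p [:: n] y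
  | None => False
  end.

Definition join (g h : nat -> nat) (m : nat) : nat :=
  if odd m then h m./2 else g m./2.

Definition K2app (g h k : nat -> nat) : Prop :=
  forall n, Phi (join g h) (g 0) n (k n).

Definition embeds_in_K2 (A : Type) (app : A -> A -> option A) : Prop :=
  exists F : A -> (nat -> nat), injective F /\
    forall a b c, app a b = Some c -> K2app (F a) (F b) (F c).

(** Only countability matters.  Fix an injection [g : A -> nat] and let [F a]
    store a fixed program index at 0, the code [g a] at 1 and, at position
    [2^(g b + 1) * (2n + 1)], the value [F (a b) n] whenever [a b] is defined.
    That program, run on the oracle [F a (+) F b], reads [g b] at position 3
    (that is, position 1 of [F b]) and then [F a] at [2^(g b + 1) * (2n + 1)],
    so it computes [F (a b)].  [F] is well defined because [n] is below that
    position, and it is injective because [F a 1 = g a]. *)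
From mathcomp Require Import all_boot.
From Stdlib Require Import ClassicalEpsilon.

Set Implicit Arguments. Unset Strict Implicit.

Definition pow2_odd (j n : nat) : nat := 2 ^ j * n.*2.+1.

Lemma logn2_pow2_odd j n : logn 2 (pow2_odd j n) = j.
Proof.
rewrite /pow2_odd lognM ?expn_gt0 // pfactorK //.
by rewrite logn_coprime ?addn0 // coprime2n /= odd_double.
Qed.

Lemma pow2_odd_inj j n j' n' : pow2_odd j n = pow2_odd j' n' -> j = j' /\ n = n'.
Proof.
move=> eq_code; have eq_j : j = j' by rewrite -(logn2_pow2_odd j n) eq_code logn2_pow2_odd.
split=> //; move: eq_code; rewrite /pow2_odd eq_j => /eqP.
by rewrite eqn_pmul2l ?expn_gt0 // eqSS => /eqP/double_inj.
Qed.

Lemma pow2_odd_gt j n : n < pow2_odd j n.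
Proof. by rewrite (leq_trans _ (leq_pmull _ (expn_gt0 2 j))) // ltnS -addnn leq_addr. Qed.

Lemma pow2_odd_S j n : pow2_odd j.+1 n = (pow2_odd j n).*2.
Proof. by rewrite /pow2_odd expnS -mulnA mul2n. Qed.

Lemma pow2_odd_S_gt1 j n : 1 < pow2_odd j.+1 n.
Proof. by rewrite pow2_odd_S -[2]/(1.*2) leq_double (leq_ltn_trans _ (pow2_odd_gt j n)). Qed.

Definition prog_comp (g : prog) (hs : seq prog) : prog := GenTree.Node 3 (g :: hs).
Definition prog_zero : prog := GenTree.Node 0 [::].
Definition prog_succ : prog := GenTree.Node 1 [::].
Definition prog_oracle : prog := GenTree.Node 2 [::].
Definition prog_rec (b s : prog) : prog := GenTree.Node 4 [:: b; s].
Definition prog_succn (k : nat) (p : prog) : prog :=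
  iter k (fun q => prog_comp prog_succ [:: q]) p.

Definition prog_double : prog :=
  prog_rec prog_zero (prog_succn 2 (GenTree.Leaf 1)).
Definition prog_pow2_odd : prog :=
  prog_rec (prog_succn 1 (prog_comp prog_double [:: GenTree.Leaf 0]))
           (prog_comp prog_double [:: GenTree.Leaf 1]).

(* With oracle [u (+) v], query 3 returns [v 1] and query [2m] returns [u m]. *)
Definition prog_apply : prog :=
  prog_comp prog_oracle
    [:: prog_comp prog_pow2_odd
          [:: prog_succn 2 (prog_comp prog_oracle [:: prog_succn 3 prog_zero]);
              GenTree.Leaf 0]].

Section Evaluation.
Variable f : nat -> nat.

Lemma eval_comp1 g h xs y z :
  eval f h xs y -> eval f g [:: y] z -> eval f (prog_comp g [:: h]) xs z.
Proof. by move=> eval_h eval_g; apply: (ev_comp (ys := [:: y])) => //; do !constructor. Qed.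

Lemma eval_comp2 g h1 h2 xs y1 y2 z :
  eval f h1 xs y1 -> eval f h2 xs y2 -> eval f g [:: y1; y2] z ->
  eval f (prog_comp g [:: h1; h2]) xs z.
Proof.
by move=> eval_h1 eval_h2 eval_g; apply: (ev_comp (ys := [:: y1; y2])) => //; do !constructor.
Qed.

Lemma eval_succn k p xs y : eval f p xs y -> eval f (prog_succn k p) xs (k + y).
Proof. by move=> eval_p; elim: k => //= k IHk; apply: eval_comp1 IHk _; apply: ev_succ. Qed.

Lemma eval_double x : eval f prog_double [:: x] x.*2.
Proof.
elim: x => [|x IHx]; first by apply: ev_rec0; apply: ev_zero.
by apply: (ev_recS IHx); rewrite doubleS; apply: (eval_succn 2); apply: ev_proj.
Qed.

Lemma eval_pow2_odd j n : eval f prog_pow2_odd [:: j; n] (pow2_odd j n).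
Proof.
elim: j => [|j IHj].
  rewrite /pow2_odd expn0 mul1n; apply: ev_rec0; apply: (eval_succn 1).
  by apply: eval_comp1 (eval_double _); apply: ev_proj.
rewrite pow2_odd_S; apply: (ev_recS IHj).
by apply: eval_comp1 (eval_double _); apply: ev_proj.
Qed.

Lemma eval_apply n : eval f prog_apply [:: n] (f (pow2_odd (f 3).+2 n)).
Proof.
apply: eval_comp1 (ev_orc _ _ _); apply: eval_comp2 (eval_pow2_odd _ _); last exact: ev_proj.
by apply: (eval_succn 2); apply: eval_comp1 (ev_orc _ _ _); apply: (eval_succn 3); apply: ev_zero.
Qed.

End Evaluation.

Lemma K2app_prog_apply (u v w : nat -> nat) :
  unpickle (u 0) = Some prog_apply -> (forall n, w n = u (pow2_odd (v 1).+1 n)) ->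
  K2app u v w.
Proof.
move=> u0 wE n; rewrite /Phi u0 wE.
have -> : u (pow2_odd (v 1).+1 n) = join u v (pow2_odd (join u v 3).+2 n).
  by rewrite {2}/join /= /join [pow2_odd _.+2 _]pow2_odd_S odd_double doubleK.
exact: eval_apply.
Qed.

Section CountableEmbedding.
Variables (A : Type) (app : A -> A -> option A) (g : A -> nat) (index : nat).
Hypothesis g_inj : injective g.
Hypothesis index_apply : unpickle index = Some prog_apply.

Definition app_at (a : A) (m : nat) (nc : nat * A) : Prop :=
  exists b, m = pow2_odd (g b).+1 nc.1 /\ app a b = Some nc.2.

Lemma app_at_uniq a m nc nc' : app_at a m nc -> app_at a m nc' -> nc = nc'.
Proof.
case: nc nc' => n c [n' c'] [b [m_code ab]] [b' [m_code' ab']] /=.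
move: m_code; rewrite m_code' => /pow2_odd_inj [/eq_add_S/g_inj eq_b /= ->].
by move: ab'; rewrite eq_b ab => -[->].
Qed.

Definition decode (a : A) (m : nat) : option (nat * A) :=
  match excluded_middle_informative (exists nc, app_at a m nc) with
  | left ex_nc => Some (proj1_sig (constructive_indefinite_description _ ex_nc))
  | right _ => None
  end.

Lemma decodeP a m nc : decode a m = Some nc -> app_at a m nc.
Proof. by rewrite /decode; case: excluded_middle_informative => // ex_nc [<-]; apply: proj2_sig. Qed.

Lemma decode_app_at a m nc : app_at a m nc -> decode a m = Some nc.
Proof.
move=> at_nc; rewrite /decode; case: excluded_middle_informative => [ex_nc|]; last first.
  by case; exists nc.
by congr Some; apply: app_at_uniq (proj2_sig _) at_nc.
Qed.

Fixpoint code_fuel (fuel : nat) (a : A) (m : nat) : nat :=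
  if fuel is fuel'.+1 then
    if m == 0 then index else if m == 1 then g a else
    if decode a m is Some (n, c) then code_fuel fuel' c n else 0
  else 0.

(* Each recursive call strictly decreases the position, so [m.+1] is enough fuel. *)
Lemma code_fuel_enough fuel fuel' a m :
  m < fuel -> m < fuel' -> code_fuel fuel a m = code_fuel fuel' a m.
Proof.
elim: fuel fuel' a m => [|fuel IHfuel] [|fuel'] a m //= lt_fuel lt_fuel'.
case: (m == 0) => //; case: (m == 1) => //.
case dec_m: (decode a m) => [[n c]|] //.
have [b [m_code _]] := decodeP dec_m.
have := pow2_odd_gt (g b).+1 n; rewrite /= -m_code => lt_n_m.
by apply: IHfuel; apply: leq_trans lt_n_m _; rewrite -ltnS.
Qed.

Definition code (a : A) (m : nat) : nat := code_fuel m.+1 a m.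

Lemma code0 a : code a 0 = index. Proof. by []. Qed.

Lemma code1 a : code a 1 = g a. Proof. by []. Qed.

Lemma code_app a b c n :
  app a b = Some c -> code a (pow2_odd (g b).+1 n) = code c n.
Proof.
move=> ab; have at_m : app_at a (pow2_odd (g b).+1 n) (n, c) by exists b.
have lt_n_m := pow2_odd_gt (g b).+1 n; have gt1_m := pow2_odd_S_gt1 (g b) n.
rewrite [LHS]/code [LHS]/= (gtn_eqF (ltnW gt1_m)) (gtn_eqF gt1_m) (decode_app_at at_m).
exact: code_fuel_enough.
Qed.

Lemma code_inj : injective code.
Proof. by move=> a a' eq_code; apply: g_inj; rewrite -!code1 eq_code. Qed.

Lemma code_K2app a b c : app a b = Some c -> K2app (code a) (code b) (code c).
Proof.
move=> ab; apply: K2app_prog_apply => [|n]; first by rewrite code0.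
by rewrite code1 (code_app _ ab).
Qed.

End CountableEmbedding.

Lemma countable_embeds_in_K2 (A : Type) (app : A -> A -> option A) :
  countable_type A -> embeds_in_K2 app.
Proof.
have [index index_apply] : exists index, unpickle index = Some prog_apply.
  by exists (pickle prog_apply); rewrite pickleK.
case=> g g_inj; exists (code app g index); split; first exact: code_inj.
exact: code_K2app.
Qed.

Theorem corollary6p2 (A : Type) (app : A -> A -> option A) :
  is_pca app -> countable_type A -> embeds_in_K2 app.
Proof. by move=> _; apply: countable_embeds_in_K2. Qed.
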